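(* Let $X\subseteq\Omega$ be club in $\Omega$ with $0\notin X$. If $\xi\in X$ and $\xi<\Theta_X(\varepsilon_{\Omega+1})$, then there is $\zeta<\varepsilon_{\Omega+1}$ with $\Theta_X(\zeta)=\xi$.
   Context: $\Omega$ is the first uncountable ordinal; $\varepsilon_{\Omega+1}$ the least $\varepsilon>\Omega$ with $\omega^\varepsilon=\varepsilon$. Every $0<\xi<\varepsilon_{\Omega+1}$ has a unique $\Omega$-normal form $\xi=\Omega^{\alpha}\beta+\gamma$ with $0<\beta<\Omega$, $\gamma<\Omega^{\alpha}$; $C(0)=\{0\}$, $C(\Omega^\alpha\beta+\gamma)=C(\alpha)\cup C(\gamma)\cup\{\beta\}$; $\xi^*=\max C(\xi)$. $\Theta_X(\xi)$ is defined by recursion on $\xi<\varepsilon_{\Omega+1}$ as the least $\theta\in X$ with $\theta>\xi^*$ such that every $\zeta<\xi$ with $\zeta^*<\theta$ satisfies $\Theta_X(\zeta)<\theta$. With $\Omega_0=1$, $\Omega_{n+1}=\Omega^{\Omega_n}$, $\Theta_X(\varepsilon_{\Omega+1}):=\sup_{n<\omega}\Theta_X(\Omega_n)$. *)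

(* Ordinals below epsilon_{Omega+1} via Omega-normal forms
   with coefficients in an abstract copy of the countable ordinals Omega = omega_1. *)
From Stdlib Require Import Classical ClassicalEpsilon.

Set Implicit Arguments.

(* Omega (the first uncountable ordinal) = a well-order that is uncountable
   and all of whose proper initial segments are countable.  This characterizes
   omega_1 up to isomorphism. Elements of the carrier are the countable ordinals. *)
Record Omega1 := {
  carrier :> Type;
  olt : carrier -> carrier -> Prop;
  olt_irrefl : forall a, ~ olt a a;
  olt_trans : forall a b c, olt a b -> olt b c -> olt a c;
  olt_total : forall a b, olt a b \/ a = b \/ olt b a;
  olt_wf : well_founded olt;
  ozero : carrier;
  ozero_least : forall a, ~ olt a ozero;
  olt_countable_segments :
    forall a, exists f : nat -> carrier, forall b, olt b a -> exists n, f n = b;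
  o_uncountable : ~ exists f : nat -> carrier, forall b, exists n, f n = b
}.

Section Defs.
Variable W : Omega1.

Definition oone : W :=
  epsilon (inhabits (ozero W))
    (fun o => olt W (ozero W) o /\ forall b, olt W (ozero W) b -> ~ olt W b o).

Definition omax (x y : W) : W :=
  if excluded_middle_informative (olt W x y) then y else x.

Definition unbounded (X : W -> Prop) : Prop :=
  forall a, exists x, X x /\ olt W a x.
Definition closed (X : W -> Prop) : Prop :=
  forall l, (exists x, X x /\ olt W x l) ->
            (forall a, olt W a l -> exists x, X x /\ olt W a x /\ olt W x l) ->
            X l.
Definition club (X : W -> Prop) : Prop := closed X /\ unbounded X.

(* terms: TZ = 0, TN a b g = Omega^a * b + g *)
Inductive term : Type :=
| TZ : term
| TN : term -> W -> term -> term.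

Inductive ltt : term -> term -> Prop :=
| ltt_Z : forall a b g, ltt TZ (TN a b g)
| ltt_exp : forall a1 b1 g1 a2 b2 g2, ltt a1 a2 -> ltt (TN a1 b1 g1) (TN a2 b2 g2)
| ltt_coef : forall a b1 g1 b2 g2, olt W b1 b2 -> ltt (TN a b1 g1) (TN a b2 g2)
| ltt_tail : forall a b g1 g2, ltt g1 g2 -> ltt (TN a b g1) (TN a b g2).

(* Omega-normal form: 0 < b < Omega and g < Omega^a *)
Fixpoint nf (t : term) : Prop :=
  match t with
  | TZ => True
  | TN a b g =>
      nf a /\ b <> ozero W /\ nf g /\
      (g = TZ \/ exists a' b' g', g = TN a' b' g' /\ ltt a' a)
  end.

Fixpoint Cset (t : term) : list W :=
  match t with
  | TZ => ozero W :: nil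
  | TN a b g => Cset a ++ Cset g ++ b :: nil
  end.

Fixpoint star (t : term) : W :=
  match t with
  | TZ => ozero W
  | TN a b g => omax (star a) (omax b (star g))
  end.

Definition ThetaSpec (X : W -> Prop) (F : term -> W) : Prop :=
  forall xi, nf xi ->
    let P := fun th => X th /\ olt W (star xi) th /\
               (forall zeta, nf zeta -> ltt zeta xi -> olt W (star zeta) th ->
                  olt W (F zeta) th) in
    P (F xi) /\ forall th, P th -> ~ olt W th (F xi).

Definition Theta (X : W -> Prop) : term -> W :=
  epsilon (inhabits (fun _ => ozero W)) (ThetaSpec X).

Fixpoint OmegaN (n : nat) : term :=
  match n with
  | O => TN TZ oone TZ
  | S k => TN (OmegaN k) oone TZ
  end.

(* Theta_X(eps_{Omega+1}) := sup_n Theta_X(Omega_n) (least upper bound in Omega) *)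
Definition is_sup (S : W -> Prop) (s : W) : Prop :=
  (forall x, S x -> ~ olt W s x) /\
  (forall u, (forall x, S x -> ~ olt W u x) -> ~ olt W u s).

Definition ThetaEps (X : W -> Prop) : W :=
  epsilon (inhabits (ozero W))
    (is_sup (fun x => exists n, x = Theta X (OmegaN n))).

End Defs.

From Stdlib Require Import Classical ClassicalEpsilon Cantor Lia FunctionalExtensionality.

(* Pick n with xi < Theta(Omega_n) and take the ltt-least normal form eta with
   eta^* < xi <= Theta(eta); such an eta exists (Omega_n, or 0 if Theta(0) >= xi, as 0 < xi by 0 \notin X).
   Then xi satisfies every clause of the definition of Theta(eta), the clause on
   smaller zeta holding by minimality of eta, so Theta(eta) <= xi, i.e.
   Theta(eta) = xi.  Theta itself exists because ltt is well founded on normal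
   forms and because a club contains, above any point, a point closed under any
   function on terms: there are only countably many terms t with t^* < a. *)

Definition countable {A : Type} (P : A -> Prop) : Prop :=
  exists e : nat -> A, forall x, P x -> exists n, e n = x.

Lemma wf_least {A : Type} {R : A -> A -> Prop} (P : A -> Prop) :
  well_founded R -> (exists x, P x) -> exists x, P x /\ forall y, P y -> ~ R y x.
Proof.
  intros wfR [x Px]. revert Px. induction (wfR x) as [x _ IH]. intros Px.
  destruct (classic (exists y, P y /\ R y x)) as [[y [Py Ryx]]|no_smaller].
  - exact (IH y Ryx Py).
  - exists x. split; [exact Px|]. intros y Py Ryx. apply no_smaller. eauto.
Qed.

Section CountableOrdinals.
Context {W : Omega1}.
Notation lt := (olt W).

Lemma olt_asym {x y : W} : lt x y -> ~ lt y x.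
Proof. intros Hxy Hyx. exact (olt_irrefl W x (olt_trans W _ _ _ Hxy Hyx)). Qed.

Lemma nlt_eq_or_gt {x y : W} : ~ lt x y -> y = x \/ lt y x.
Proof. intros H. destruct (olt_total W x y) as [h|[h|h]]; [tauto|left; congruence|tauto]. Qed.

Lemma nlt_olt_trans {x y z : W} : ~ lt y x -> lt y z -> lt x z.
Proof.
  intros Hyx Hyz. destruct (nlt_eq_or_gt Hyx) as [->|Hxy]; [exact Hyz|].
  exact (olt_trans W _ _ _ Hxy Hyz).
Qed.

Lemma ozero_lt {x : W} : x <> ozero W -> lt (ozero W) x.
Proof.
  intros Hx. destruct (olt_total W (ozero W) x) as [h|[h|h]]; [exact h|congruence|].
  exfalso. exact (ozero_least W _ h).
Qed.

Lemma omax_lt {x y z : W} : lt (omax W x y) z -> lt x z /\ lt y z.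
Proof.
  unfold omax. destruct (excluded_middle_informative (lt x y)) as [Hxy|Hyx]; intros H.
  - split; [exact (olt_trans W _ _ _ Hxy H)|exact H].
  - split; [exact H|exact (nlt_olt_trans Hyx H)].
Qed.

Lemma sequence_bounded (h : nat -> W) : exists u, forall n, lt (h n) u.
Proof.
  destruct (choice _ (fun n => olt_countable_segments W (h n))) as [E HE].
  set (F := fun m => let (i, j) := of_nat m in
                     match j with O => h i | S j' => E i j' end).
  assert (not_onto : exists b, ~ exists m, F m = b).
  { apply not_all_ex_not. intros onto. exact (o_uncountable W (ex_intro _ F onto)). }
  destruct not_onto as [b Hb]. exists b. intros n.
  destruct (olt_total W (h n) b) as [H|[H|H]]; [exact H| |]; exfalso; apply Hb.
  - exists (to_nat (n, 0)). unfold F. rewrite cancel_of_to. exact H.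
  - destruct (HE n b H) as [m Hm].
    exists (to_nat (n, S m)). unfold F. rewrite cancel_of_to. exact Hm.
Qed.

Lemma countable_image_bounded {A : Type} {P : A -> Prop} (G : A -> W) :
  countable P -> exists u, forall x, P x -> lt (G x) u.
Proof.
  intros [e He]. destruct (sequence_bounded (fun n => G (e n))) as [u Hu].
  exists u. intros x Px. destruct (He x Px) as [n <-]. apply Hu.
Qed.

Lemma is_sup_exists (h : nat -> W) : exists s, is_sup W (fun x => exists n, x = h n) s.
Proof.
  destruct (sequence_bounded h) as [u Hu].
  destruct (wf_least (fun s => forall x, (exists n, x = h n) -> ~ lt s x)
              (olt_wf W)) as [s [Hs Hmin]].
  - exists u. intros x [n ->]. apply olt_asym, Hu.
  - exists s. split; [exact Hs|exact Hmin].
Qed.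

Lemma lt_is_sup {h : nat -> W} {s x : W} :
  is_sup W (fun y => exists n, y = h n) s -> lt x s -> exists n, lt x (h n).
Proof.
  intros [_ s_least] Hxs. apply NNPP. intros none.
  apply (s_least x); [|exact Hxs].
  intros y [n ->] Hxy. apply none. eauto.
Qed.

Lemma increasing_sequence_limit (h : nat -> W) :
  (forall n, lt (h n) (h (S n))) ->
  exists l, (forall n, lt (h n) l) /\ forall a, lt a l -> exists n, lt a (h n).
Proof.
  intros h_incr.
  destruct (wf_least (fun u => forall n, lt (h n) u) (olt_wf W) (sequence_bounded h))
    as [l [h_lt_l l_least]].
  exists l. split; [exact h_lt_l|]. intros a Hal.
  destruct (classic (forall n, lt (h n) a)) as [bound|not_bound].
  - exfalso. exact (l_least a bound Hal).
  - destruct (not_all_ex_not _ _ not_bound) as [n Hn].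
    exists (S n). exact (nlt_olt_trans Hn (h_incr n)).
Qed.

Lemma oone_spec :
  lt (ozero W) (oone W) /\ forall b, lt (ozero W) b -> ~ lt b (oone W).
Proof.
  unfold oone. apply epsilon_spec. apply (wf_least _ (olt_wf W)).
  apply NNPP. intros no_pos. apply (o_uncountable W).
  exists (fun _ => ozero W). intros b. exists 0.
  destruct (classic (b = ozero W)) as [->|Hb]; [reflexivity|].
  exfalso. exact (no_pos (ex_intro _ b (ozero_lt Hb))).
Qed.

Lemma ozero_lt_oone : lt (ozero W) (oone W).
Proof. exact (proj1 oone_spec). Qed.

Lemma oone_least {b : W} : lt (ozero W) b -> ~ lt b (oone W).
Proof. exact (proj2 oone_spec b). Qed.

End CountableOrdinals.

Section Terms.
Context {W : Omega1}.
Notation lt := (olt W).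

Fixpoint term_size (t : term W) : nat :=
  match t with TZ _ => 0 | TN a _ g => S (Nat.max (term_size a) (term_size g)) end.

(* [f] enumerates the coefficients; the code of [TN a b g] is
   (1, (i, (code a, code g))) with [f i = b], any (0, _) codes [TZ]. *)
Fixpoint decode_term (f : nat -> W) (fuel n : nat) : term W :=
  match fuel with
  | O => TZ W
  | S fuel' =>
      let (tag, r) := of_nat n in
      match tag with
      | O => TZ W
      | S _ =>
          let (i, r') := of_nat r in
          let (ca, cg) := of_nat r' in
          TN (decode_term f fuel' ca) (f i) (decode_term f fuel' cg)
      end
  end.

Lemma decode_term_complete {a : W} {f : nat -> W} :
  (forall b, lt b a -> exists m, f m = b) ->
  forall t, lt (star t) a ->
  exists n, forall fuel, term_size t <= fuel -> decode_term f fuel n = t.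
Proof.
  intros Hf. induction t as [|x IHx b g IHg]; intros Ht.
  - exists (to_nat (0, 0)). intros [|fuel] _; reflexivity.
  - simpl in Ht. apply omax_lt in Ht as [Hx Ht]. apply omax_lt in Ht as [Hb Hg].
    destruct (IHx Hx) as [nx Ex], (IHg Hg) as [ng Eg], (Hf b Hb) as [i Ei].
    exists (to_nat (1, to_nat (i, to_nat (nx, ng)))).
    intros [|fuel] Hfuel; simpl in Hfuel; [lia|].
    cbn [decode_term]. rewrite !cancel_of_to, Ex, Eg, Ei; [reflexivity|lia|lia].
Qed.

Lemma countable_terms_below (a : W) : countable (fun t : term W => lt (star t) a).
Proof.
  destruct (olt_countable_segments W a) as [f Hf].
  exists (fun m => let (fuel, n) := of_nat m in decode_term f fuel n).
  intros t Ht. destruct (decode_term_complete Hf t Ht) as [n Hn].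
  exists (to_nat (term_size t, n)). rewrite cancel_of_to. apply Hn. constructor.
Qed.

Definition ltnf (x y : term W) : Prop := nf x /\ nf y /\ ltt x y.

Lemma acc_TZ : Acc ltnf (TZ W).
Proof. constructor. intros y [_ [_ H]]. inversion H. Qed.

(* Induction on the exponent, then the coefficient, then the tail; the tail is
   accessible because, by normality, its own exponent is below [a]. *)
Lemma acc_TN {a : term W} : Acc ltnf a -> forall b g, nf (TN a b g) -> Acc ltnf (TN a b g).
Proof.
  induction 1 as [a _ IHa]. intros b.
  induction (olt_wf W b) as [b _ IHb]. intros g nft.
  assert (acc_g : Acc ltnf g).
  { destruct nft as [nfa [_ [nfg [->|[a' [b' [g' [-> Ha']]]]]]]]; [exact acc_TZ|].
    exact (IHa a' (conj (proj1 nfg) (conj nfa Ha')) b' g' nfg). }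
  revert nft. induction acc_g as [g _ IHg]. intros nft.
  constructor. intros y [nfy [_ Hy]].
  inversion Hy as [|a2 ? ? ? ? ? Hexp|? b2 g2 ? ? Hcoef|? ? g2 ? Htail]; subst.
  - exact acc_TZ.
  - exact (IHa a2 (conj (proj1 nfy) (conj (proj1 nft) Hexp)) _ _ nfy).
  - exact (IHb b2 Hcoef g2 nfy).
  - apply (IHg g2); [|exact nfy].
    exact (conj (proj1 (proj2 (proj2 nfy))) (conj (proj1 (proj2 (proj2 nft))) Htail)).
Qed.

Lemma ltnf_wf : well_founded ltnf.
Proof.
  intros t. destruct (classic (nf t)) as [nft|not_nf].
  2:{ constructor. intros y [_ [nft _]]. contradiction. }
  destruct t as [|a b g]; [exact acc_TZ|].
  revert b g nft. induction a as [|a' IHa' b' g' _]; intros b g nft.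
  - exact (acc_TN acc_TZ b g nft).
  - exact (acc_TN (IHa' b' g' (proj1 nft)) b g nft).
Qed.

Lemma nf_OmegaN (n : nat) : nf (OmegaN W n).
Proof.
  assert (oone_neq : oone W <> ozero W).
  { intros E. apply (olt_irrefl W (ozero W)). rewrite <- E at 2. exact ozero_lt_oone. }
  induction n; simpl; auto 7.
Qed.

Lemma star_OmegaN (n : nat) : star (OmegaN W n) = oone W.
Proof.
  assert (max_1_0 : omax W (oone W) (ozero W) = oone W).
  { unfold omax. destruct (excluded_middle_informative _) as [h|_]; [|reflexivity].
    exfalso. exact (ozero_least W _ h). }
  assert (max_x_x : forall x : W, omax W x x = x).
  { intros x. unfold omax. destruct (excluded_middle_informative _); reflexivity. }
  induction n; simpl; rewrite ?IHn, max_1_0; [|apply max_x_x].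
  unfold omax. destruct (excluded_middle_informative _) as [_|h]; [reflexivity|].
  exfalso. exact (h ozero_lt_oone).
Qed.

End Terms.

Section ClubClosure.
Context {W : Omega1} {T : Type} (size : T -> W) (X : W -> Prop).
Notation lt := (olt W).
Hypothesis size_segments_countable : forall a, countable (fun t => lt (size t) a).
Hypothesis X_club : club W X.

Lemma club_closure_point (G : T -> W) (s : W) :
  exists l, X l /\ lt s l /\ forall t, lt (size t) l -> lt (G t) l.
Proof.
  destruct (choice _ (fun a => countable_image_bounded G (size_segments_countable a)))
    as [B HB].
  destruct X_club as [X_closed X_unbounded].
  destruct (choice _ (fun a => X_unbounded (omax W a (B a)))) as [next Hnext].
  set (h := fix h n := match n with O => next s | S m => next (h m) end).
  assert (X_h : forall n, X (h n)) by (intros [|n]; apply Hnext).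
  assert (h_step : forall n, lt (h n) (h (S n)) /\ lt (B (h n)) (h (S n)))
    by (intros n; exact (omax_lt (proj2 (Hnext (h n))))).
  destruct (increasing_sequence_limit h (fun n => proj1 (h_step n)))
    as [l [h_lt_l h_cofinal]].
  exists l. split; [|split].
  - apply X_closed; [exists (h 0); auto|].
    intros a Ha. destruct (h_cofinal a Ha) as [n Hn]. exists (h n). auto.
  - exact (olt_trans W _ _ _ (proj1 (omax_lt (proj2 (Hnext s)))) (h_lt_l 0)).
  - intros t Ht. destruct (h_cofinal _ Ht) as [n Hn].
    exact (olt_trans W _ _ _ (HB (h n) t Hn) (olt_trans W _ _ _ (proj2 (h_step n)) (h_lt_l _))).
Qed.

End ClubClosure.

Section ThetaConstruction.
Context {W : Omega1} (X : W -> Prop).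
Notation lt := (olt W).
Hypothesis X_club : club W X.

Definition theta_clauses (xi : term W) (rec : forall y, ltnf y xi -> W) (th : W) : Prop :=
  X th /\ lt (star xi) th /\
  forall zeta (H : ltnf zeta xi), lt (star zeta) th -> lt (rec zeta H) th.

Definition theta_step (xi : term W) (rec : forall y, ltnf y xi -> W) : W :=
  epsilon (inhabits (ozero W))
    (fun th => theta_clauses xi rec th /\ forall t, theta_clauses xi rec t -> ~ lt t th).

Definition theta_rec : term W -> W := Fix ltnf_wf (fun _ => W) theta_step.

Lemma theta_rec_unfold (xi : term W) : theta_rec xi = theta_step xi (fun y _ => theta_rec y).
Proof.
  apply (Fix_eq ltnf_wf (fun _ => W) theta_step). intros x f g Hfg.
  replace f with g; [reflexivity|].
  apply functional_extensionality_dep. intros y.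
  apply functional_extensionality_dep. intros H. symmetry. apply Hfg.
Qed.

Lemma theta_rec_spec : ThetaSpec X theta_rec.
Proof.
  intros xi nfxi. simpl.
  assert (Hstep : theta_clauses xi (fun y _ => theta_rec y) (theta_rec xi) /\
                  forall t, theta_clauses xi (fun y _ => theta_rec y) t -> ~ lt t (theta_rec xi)).
  { rewrite theta_rec_unfold. unfold theta_step. apply epsilon_spec.
    apply (wf_least _ (olt_wf W)).
    destruct (club_closure_point (@star W) X countable_terms_below X_club theta_rec (star xi))
      as [th [Xth [Hs Hclosed]]].
    exists th. split; [exact Xth|split; [exact Hs|]]. intros zeta _. apply Hclosed. }
  destruct Hstep as [[Xth [Hs Hrec]] Hleast]. split.
  - split; [exact Xth|split; [exact Hs|]].
    intros zeta nfz Hz. exact (Hrec zeta (conj nfz (conj nfxi Hz))).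
  - intros t [Xt [Hst Ht]]. apply Hleast. split; [exact Xt|split; [exact Hst|]].
    intros zeta [nfz [_ Hz]]. exact (Ht zeta nfz Hz).
Qed.

Lemma Theta_spec : ThetaSpec X (Theta X).
Proof. unfold Theta. apply epsilon_spec. exists theta_rec. exact theta_rec_spec. Qed.

Lemma star_lt_Theta (xi : term W) : nf xi -> lt (star xi) (Theta X xi).
Proof. intros nfxi. exact (proj1 (proj2 (proj1 (Theta_spec xi nfxi)))). Qed.

Lemma Theta_attains {xi : W} :
  X xi -> (exists eta, nf eta /\ lt (star eta) xi /\ ~ lt (Theta X eta) xi) ->
  exists zeta, nf zeta /\ Theta X zeta = xi.
Proof.
  intros Xxi candidates.
  destruct (wf_least _ ltnf_wf candidates) as [eta [[nfe [Hstar Hge]] eta_least]].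
  exists eta. split; [exact nfe|].
  destruct (nlt_eq_or_gt Hge) as [E|Hlt]; [symmetry; exact E|exfalso].
  apply (proj2 (Theta_spec eta nfe) xi); [|exact Hlt].
  split; [exact Xxi|split; [exact Hstar|]].
  intros zeta nfz Hz Hzs. apply NNPP. intros Hzge.
  exact (eta_least zeta (conj nfz (conj Hzs Hzge)) (conj nfz (conj nfe Hz))).
Qed.

End ThetaConstruction.

Lemma lt_ThetaEps {W : Omega1} {X : W -> Prop} {xi : W} :
  olt W xi (ThetaEps W X) -> exists n, olt W xi (Theta X (OmegaN W n)).
Proof.
  apply lt_is_sup. unfold ThetaEps. apply epsilon_spec. apply is_sup_exists.
Qed.

Theorem corollary3p4 (W : Omega1) (X : W -> Prop) :
  club W X -> ~ X (ozero W) ->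
  forall xi : W, X xi -> olt W xi (ThetaEps W X) ->
  exists zeta : term W, nf zeta /\ Theta X zeta = xi.
Proof.
  intros X_club X0 xi Xxi xi_lt.
  destruct (lt_ThetaEps xi_lt) as [n xi_lt_n].
  apply (Theta_attains X X_club Xxi).
  destruct (classic (olt W (Theta X (TZ W)) xi)) as [Theta0_lt|Theta0_ge].
  - exists (OmegaN W n). split; [apply nf_OmegaN|split; [|exact (olt_asym xi_lt_n)]].
    rewrite star_OmegaN.
    exact (nlt_olt_trans (oone_least (star_lt_Theta X X_club (TZ W) I)) Theta0_lt).
  - exists (TZ W). split; [exact I|split; [|exact Theta0_ge]].
    apply ozero_lt. intros ->. exact (X0 Xxi).
Qed.
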